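(* Let $n\ge2$ be an integer and write $n-1=\sum_{i=0}^m p_i2^i$ with $p_i\in\{0,1\}$ and $p_m=1$; let $I=\{i\mid p_i=1\}$. In the standard MV-algebra $[0,1]_{\text{Ł}}$, the system of equations $y_0=\neg x$, $y_j=y_{j-1}^2$ for $j=1,\dots,m$, and $x=\prod_{i\in I}y_i$ has a unique solution, and in it $x=1/n$.
   Context: Standard MV-algebra $[0,1]_{\text{Ł}}$: domain $[0,1]$, $x\cdot y=\max(0,x+y-1)$, $\neg x=1-x$. Powers $y^2=y\cdot y$ and the product $\prod$ refer to the operation $\cdot$. *)

From Stdlib Require Import Reals Lra Lia Arith List.
Open Scope R_scope.

Definition luk_mul (x y : R) : R := Rmax 0 (x + y - 1).
Definition luk_neg (x : R) : R := 1 - x.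

Definition luk_prod (l : list R) : R := fold_right luk_mul 1 l.

(* Binary expansion of k = n-1 >= 1: k = sum_{i=0}^m p_i 2^i, p_m = 1,
   so m = Nat.log2 k and p_i = Nat.testbit k i. *)
Definition top_index (k : nat) : nat := Nat.log2 k.
Definition bit_set (k : nat) : list nat :=
  filter (fun i => Nat.testbit k i) (seq 0 (S (top_index k))).

Definition lsystem (n : nat) (x : R) (y : nat -> R) : Prop :=
  let k := (n - 1)%nat in
  let m := top_index k in
  (0 <= x <= 1) /\
  (forall j, (j <= m)%nat -> 0 <= y j <= 1) /\
  y 0%nat = luk_neg x /\
  (forall j, (1 <= j <= m)%nat -> y j = luk_mul (y (j - 1)%nat) (y (j - 1)%nat)) /\
  x = luk_prod (map y (bit_set k)).

(* Writing y := ¬x, the Łukasiewicz power y^k is max(0, 1 - k x), so powers of y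
   add their exponents.  Hence y_j = y^(2^j) and the product over I is y^(n-1),
   turning the system into the single equation x = max(0, 1 - (n-1) x), whose only
   solution in [0,1] is x = 1/n. *)
From Stdlib Require Import Reals Lra Lia Arith List.
Open Scope R_scope.

Definition luk_pow (y : R) (k : nat) : R := luk_prod (repeat y k).

Lemma luk_mul_trunc (d a b : R) : 0 <= d -> 0 <= a -> 0 <= b ->
  luk_mul (Rmax 0 (1 - a * d)) (Rmax 0 (1 - b * d)) = Rmax 0 (1 - (a + b) * d).
Proof.
  intros Hd Ha Hb; unfold luk_mul, Rmax.
  repeat destruct Rle_dec; nra.
Qed.

Lemma luk_pow_closed (y : R) (k : nat) : 0 <= y <= 1 ->
  luk_pow y k = Rmax 0 (1 - INR k * (1 - y)).
Proof.
  intros Hy; induction k as [|k IH].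
  - unfold luk_pow, luk_prod, Rmax; simpl; destruct Rle_dec; lra.
  - change (luk_pow y (S k)) with (luk_mul y (luk_pow y k)).
    assert (Ey : y = Rmax 0 (1 - 1 * (1 - y))) by (unfold Rmax; destruct Rle_dec; lra).
    rewrite IH, Ey at 1.
    rewrite luk_mul_trunc, S_INR by (pose proof (pos_INR k); lra).
    f_equal; ring.
Qed.

Lemma luk_pow_range (y : R) (k : nat) : 0 <= y <= 1 -> 0 <= luk_pow y k <= 1.
Proof.
  intros Hy; rewrite luk_pow_closed by exact Hy.
  pose proof (pos_INR k); unfold Rmax; destruct Rle_dec; nra.
Qed.

Lemma luk_pow_1 (y : R) : 0 <= y <= 1 -> luk_pow y 1 = y.
Proof.
  intros Hy; rewrite luk_pow_closed by exact Hy.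
  unfold Rmax; simpl; destruct Rle_dec; lra.
Qed.

Lemma luk_pow_add (y : R) (a b : nat) : 0 <= y <= 1 ->
  luk_mul (luk_pow y a) (luk_pow y b) = luk_pow y (a + b).
Proof.
  intros Hy; rewrite !luk_pow_closed, luk_mul_trunc, plus_INR by
    (try exact Hy; try apply pos_INR; lra).
  reflexivity.
Qed.

Lemma luk_prod_pow (y : R) (l : list nat) : 0 <= y <= 1 ->
  luk_prod (map (luk_pow y) l) = luk_pow y (list_sum l).
Proof.
  intros Hy; induction l as [|a l IH]; [reflexivity|].
  change (luk_mul (luk_pow y a) (luk_prod (map (luk_pow y) l)) =
          luk_pow y (a + list_sum l)).
  rewrite IH; apply luk_pow_add, Hy.
Qed.

Lemma list_sum_pow2_testbit (k N : nat) :
  list_sum (map (Nat.pow 2) (filter (Nat.testbit k) (seq 0 N))) = (k mod 2 ^ N)%nat.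
Proof.
  induction N as [|N IH]; [reflexivity|].
  rewrite seq_S, filter_app, map_app, list_sum_app, IH.
  rewrite Nat.pow_succ_r', Nat.mul_comm, Nat.Div0.mod_mul_r; simpl filter.
  rewrite Nat.testbit_eqb.
  pose proof (Nat.mod_upper_bound (k / 2 ^ N) 2 ltac:(lia)).
  destruct ((k / 2 ^ N) mod 2) as [|[|b]]; simpl; lia.
Qed.

Lemma list_sum_pow2_bit_set (k : nat) : (0 < k)%nat ->
  list_sum (map (Nat.pow 2) (bit_set k)) = k.
Proof.
  intros Hk; unfold bit_set, top_index.
  rewrite list_sum_pow2_testbit; apply Nat.mod_small, Nat.log2_spec, Hk.
Qed.

Lemma luk_prod_pow2_bit_set (y : R) (k : nat) : 0 <= y <= 1 -> (0 < k)%nat ->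
  luk_prod (map (fun i => luk_pow y (2 ^ i)) (bit_set k)) = luk_pow y k.
Proof.
  intros Hy Hk.
  rewrite <- (map_map (Nat.pow 2)), luk_prod_pow, list_sum_pow2_bit_set by assumption.
  reflexivity.
Qed.

Lemma luk_pow_neg_fixpoint (x : R) (k : nat) : 0 <= x <= 1 ->
  x = luk_pow (luk_neg x) k <-> x = 1 / INR (S k).
Proof.
  intros Hx; unfold luk_neg; rewrite luk_pow_closed, S_INR by lra.
  replace (1 - (1 - x)) with x by ring.
  pose proof (pos_INR k).
  split; intros E.
  - revert E; unfold Rmax; destruct Rle_dec; intros E; [|nra].
    field_simplify_eq; lra.
  - assert (0 < x) by (rewrite E; apply Rdiv_lt_0_compat; lra).
    assert (Ex : 1 - INR k * x = x) by (rewrite E; field; lra).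
    rewrite Ex; unfold Rmax; destruct Rle_dec; lra.
Qed.

Lemma lsystem_powers (n : nat) (x : R) : (2 <= n)%nat -> 0 <= x <= 1 ->
  x = luk_pow (luk_neg x) (n - 1) ->
  lsystem n x (fun j => luk_pow (luk_neg x) (2 ^ j)).
Proof.
  intros hn Hx Efix.
  assert (Hy : 0 <= luk_neg x <= 1) by (unfold luk_neg; lra).
  split; [exact Hx|]; split; [|split; [|split]].
  - intros j _; apply luk_pow_range, Hy.
  - apply luk_pow_1, Hy.
  - intros j Hj; rewrite luk_pow_add by exact Hy.
    f_equal; destruct j as [|j]; [lia|].
    rewrite Nat.sub_succ, Nat.sub_0_r, Nat.pow_succ_r'; lia.
  - rewrite luk_prod_pow2_bit_set by (try exact Hy; lia).
    exact Efix.
Qed.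

Lemma lsystem_powers_inv (n : nat) (x : R) (y : nat -> R) : (2 <= n)%nat ->
  lsystem n x y ->
  (forall j, (j <= top_index (n - 1))%nat -> y j = luk_pow (luk_neg x) (2 ^ j)) /\
  x = luk_pow (luk_neg x) (n - 1).
Proof.
  intros hn (Hx & _ & Hy0 & Hrec & Hprod).
  assert (Hy : 0 <= luk_neg x <= 1) by (unfold luk_neg; lra).
  assert (Ey : forall j, (j <= top_index (n - 1))%nat ->
            y j = luk_pow (luk_neg x) (2 ^ j)).
  { induction j as [|j IH]; intros Hj.
    - rewrite Hy0; symmetry; apply luk_pow_1, Hy.
    - rewrite Hrec, Nat.sub_succ, Nat.sub_0_r, IH, luk_pow_add by (try exact Hy; lia).
      f_equal; rewrite Nat.pow_succ_r'; lia. }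
  split; [exact Ey|].
  rewrite Hprod at 1.
  rewrite (map_ext_in _ (fun i => luk_pow (luk_neg x) (2 ^ i))).
  - apply luk_prod_pow2_bit_set; [exact Hy | lia].
  - intros i Hi; apply Ey.
    apply filter_In in Hi as [Hi _]; apply in_seq in Hi; lia.
Qed.

Theorem lemma4p1 (n : nat) (hn : (2 <= n)%nat) :
  (exists x y, lsystem n x y) /\
  (forall x y x' y', lsystem n x y -> lsystem n x' y' ->
     x = x' /\ forall j, (j <= top_index (n - 1))%nat -> y j = y' j) /\
  (forall x y, lsystem n x y -> x = 1 / INR n).
Proof.
  assert (En : S (n - 1) = n) by lia.
  assert (Hsol : forall x y, lsystem n x y -> x = 1 / INR n).
  { intros x y Hs.
    assert (Hx : 0 <= x <= 1) by apply Hs.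
    apply (luk_pow_neg_fixpoint x (n - 1)) in Hx as [Hfix _].
    rewrite <- En; apply Hfix, (lsystem_powers_inv n x y hn Hs). }
  split; [|split; [|exact Hsol]].
  - assert (Hn : 2 <= INR n) by (apply (le_INR 2), hn).
    assert (Hx : 0 <= 1 / INR n <= 1).
    { split; [apply Rlt_le, Rdiv_lt_0_compat; lra|].
      apply Rmult_le_reg_r with (INR n); [lra|]; field_simplify; lra. }
    exists (1 / INR n), (fun j => luk_pow (luk_neg (1 / INR n)) (2 ^ j)).
    apply lsystem_powers; [exact hn | exact Hx|].
    apply luk_pow_neg_fixpoint; [exact Hx|]; rewrite En; reflexivity.
  - intros x y x' y' Hs Hs'.
    assert (Ex : x = x') by (rewrite (Hsol x y Hs), (Hsol x' y' Hs'); reflexivity).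
    split; [exact Ex|]; intros j Hj.
    rewrite (proj1 (lsystem_powers_inv n x y hn Hs) j Hj),
            (proj1 (lsystem_powers_inv n x' y' hn Hs') j Hj), Ex.
    reflexivity.
Qed.
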